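(* Let $\mathscr{X}$ be a complex Banach space and $\mathcal{A}\subseteq\mathcal{B}(\mathscr{X})$ a reflexive algebra with commutant $\mathcal{A}'$. Then $\mathrm{Grp}(\mathcal{A})\mathrm{Grp}(\mathcal{A}')\subseteq\mathrm{Col}(\mathcal{A})\subseteq\mathrm{Col}(\mathcal{A}')$. Moreover, if both $\mathcal{A}$ and $\mathcal{A}'$ are reflexive, then $\mathrm{Grp}(\mathcal{A})\mathrm{Grp}(\mathcal{A}')$ is a normal subgroup of $\mathrm{Col}(\mathcal{A})$.
   Context: $\mathcal{A}'=\{T\in\mathcal{B}(\mathscr{X}):TA=AT\ \forall A\in\mathcal{A}\}$. A subalgebra $\mathcal{A}$ is reflexive if $\mathrm{Alg}\,\mathrm{Lat}(\mathcal{A})=\mathcal{A}$, where $\mathrm{Lat}(\mathcal{T})$ is the set of closed subspaces invariant under all operators of $\mathcal{T}$ and $\mathrm{Alg}(\mathfrak{F})$ is the set of operators leaving every subspace of $\mathfrak{F}$ invariant. For a unital algebra $\mathcal{B}$, $\mathrm{Grp}(\mathcal{B})$ is the group of invertible $S\in\mathcal{B}$ with $S^{-1}\in\mathcal{B}$, and $\mathrm{Grp}(\mathcal{A})\mathrm{Grp}(\mathcal{A}')=\{AB:A\in\mathrm{Grp}(\mathcal{A}),B\in\mathrm{Grp}(\mathcal{A}')\}$. For a set $\mathcal{T}$ of operators, $\mathrm{Col}(\mathcal{T})$ is the group of invertible $S\in\mathcal{B}(\mathscr{X})$ such that for every closed subspace $\mathscr{M}$: $\mathscr{M}\in\mathrm{Lat}(\mathcal{T})$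 iff $S\mathscr{M}\in\mathrm{Lat}(\mathcal{T})$. *)

(* Complex scalars: R[i] = complex R for R : realType
   (real_closed's complex numbers, a numFieldType whose norm is the modulus).
   A complex Banach space is a completeNormedModType R[i]. *)
From mathcomp Require Import all_boot all_algebra all_classical all_reals all_analysis.
From mathcomp Require Import complex.
Import numFieldNormedType.Exports.
Set Implicit Arguments. Unset Strict Implicit. Unset Printing Implicit Defensive.
Local Open Scope classical_set_scope.
Local Open Scope ring_scope.

Section Defs.
Variables (R : realType) (X : completeNormedModType R[i]).

(* bounded (= continuous) linear operators on X : the set B(X) *)
Definition bop (T : X -> X) : Prop :=
  (forall (a : R[i]) (x y : X), T (a *: x + y) = a *: T x + T y) /\ continuous T.

Definition closed_subspace (M : set X) : Prop :=
  M 0 /\ (forall (a : R[i]) (x y : X), M x -> M y -> M (a *: x + y)) /\ closed M.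

Definition invariant (T : X -> X) (M : set X) : Prop :=
  forall x, M x -> M (T x).

Definition Lat (TT : set (X -> X)) : set (set X) :=
  [set M | closed_subspace M /\ forall T, TT T -> invariant T M].

Definition Alg (F : set (set X)) : set (X -> X) :=
  [set T | bop T /\ forall M, F M -> invariant T M].

Definition commutant (A : set (X -> X)) : set (X -> X) :=
  [set T | bop T /\ forall S, A S -> T \o S = S \o T].

Definition subalgebra (A : set (X -> X)) : Prop :=
  A `<=` bop /\ A (fun _ => 0) /\
  (forall (a : R[i]) S T, A S -> A T -> A (fun x => a *: S x + T x)) /\
  (forall S T, A S -> A T -> A (S \o T)).

Definition reflexive_alg (A : set (X -> X)) : Prop := Alg (Lat A) = A.

Definition Grp (B : set (X -> X)) : set (X -> X) :=
  [set S | B S /\ exists S', B S' /\ S \o S' = id /\ S' \o S = id].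

Definition GrpProd (A : set (X -> X)) : set (X -> X) :=
  [set S | exists U V, Grp A U /\ Grp (commutant A) V /\ S = U \o V].

Definition Col (TT : set (X -> X)) : set (X -> X) :=
  [set S | Grp bop S /\
     forall M, closed_subspace M -> (Lat TT M <-> Lat TT (S @` M))].

Definition normal_subgroup (N G : set (X -> X)) : Prop :=
  N `<=` G /\ N id /\
  (forall S T, N S -> N T -> N (S \o T)) /\
  (forall S S', N S -> S \o S' = id -> S' \o S = id -> N S') /\
  (forall S S' T, G S -> S \o S' = id -> S' \o S = id -> N T -> N (S \o T \o S')).

End Defs.

(* Reflexivity means A = Alg (Lat A), so an operator lies in A as soon as it leaves
   every subspace of Lat A invariant.  For S in Col A and M in Lat A, S M is again in
   Lat A, so every T in A maps S M into itself, i.e. S^-1 T S leaves M invariant: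
   conjugation by Col A preserves A, hence also A'.  This yields Col A <= Col A', and
   the normality of Grp(A) Grp(A') in Col A, since S Grp(A) S^-1 = Grp(A) and
   S Grp(A') S^-1 = Grp(A').  Invertible elements of A fix every M in Lat A and those
   of A' permute Lat A, so Grp(A) Grp(A') <= Col A; it is a group because A' commutes
   with A. *)
From mathcomp Require Import all_boot all_algebra all_classical all_reals all_analysis.
From mathcomp Require Import complex.
Import numFieldNormedType.Exports.
Local Open Scope classical_set_scope.
Local Open Scope ring_scope.

Import GRing.Theory.
Set Implicit Arguments. Unset Strict Implicit.

Section InvertibleMaps.
Variable T : Type.
Implicit Types (S U : T -> T).

Lemma comp_idK S S' : S \o S' = id -> cancel S' S.
Proof. by move=> SS' x; exact: (congr1 (@^~ x) SS'). Qed.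

Lemma comp_commute S U : S \o U = U \o S -> forall x, S (U x) = U (S x).
Proof. by move=> SU x; exact: (congr1 (@^~ x) SU). Qed.

Lemma inverse_unique S S' S'' : S \o S' = id -> S'' \o S = id -> S'' = S'.
Proof.
move=> SS' S''S; apply: funext => x.
by rewrite -{1}(comp_idK SS' x) (comp_idK S''S).
Qed.

Lemma image_cancel S S' (M : set T) : S' \o S = id -> S' @` (S @` M) = M.
Proof. by move=> S'S; rewrite image_comp S'S image_id. Qed.

End InvertibleMaps.

Section Operators.
Variables (R : realType) (X : completeNormedModType R[i]).
Implicit Types (S T U V W : X -> X) (M : set X) (F : set (set X)) (A B : set (X -> X)).

Lemma Grp_inverse B S S' : Grp B S -> S \o S' = id -> Grp B S'.
Proof.
move=> [BS [S'' [BS'' [SS'' S''S]]]] SS'.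
have <- := inverse_unique SS' S''S.
by split=> //; exists S.
Qed.

Lemma Grp_id B : B id -> Grp B id.
Proof. by move=> Bid; split=> //; exists id. Qed.

Lemma Grp_comp B S U : (forall S U, B S -> B U -> B (S \o U)) ->
  Grp B S -> Grp B U -> Grp B (S \o U).
Proof.
move=> Bcomp [BS [S' [BS' [SS' S'S]]]] [BU [U' [BU' [UU' U'U]]]].
split; first exact: Bcomp.
exists (U' \o S'); split; first exact: Bcomp.
by split; apply: funext => x /=;
  rewrite ?(comp_idK UU') ?(comp_idK SS') ?(comp_idK S'S) ?(comp_idK U'U).
Qed.

Lemma Grp_conj B S S' U : (forall V, B V -> B (S \o V \o S')) ->
  S \o S' = id -> S' \o S = id -> Grp B U -> Grp B (S \o U \o S').
Proof.
move=> Bconj SS' S'S [BU [U' [BU' [UU' U'U]]]].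
split; first exact: Bconj.
exists (S \o U' \o S'); split; first exact: Bconj.
by split; apply: funext => x /=;
  rewrite (comp_idK S'S) ?(comp_idK UU') ?(comp_idK U'U) (comp_idK SS').
Qed.

Lemma bop_id : bop (@id X).
Proof. by split=> // x; exact: cvg_id. Qed.

Lemma bop_comp S T : bop S -> bop T -> bop (S \o T).
Proof.
move=> [linS contS] [linT contT]; split; first by move=> a x y /=; rewrite linT linS.
by move=> x; apply: continuous_comp; [exact: contT | exact: contS].
Qed.

Lemma bop0 S : bop S -> S 0 = 0.
Proof.
move=> [linS _]; have := linS 1 0 0; rewrite !scale1r addr0 => S0.
by apply: (@addrI _ (S 0)); rewrite addr0 -S0.
Qed.

Lemma Alg_sub_bop F : Alg F `<=` @bop _ X.
Proof. by move=> T []. Qed.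

Lemma Alg_id F : Alg F id.
Proof. by split; [exact: bop_id | move=> M _ x]. Qed.

Lemma Alg_comp F S T : Alg F S -> Alg F T -> Alg F (S \o T).
Proof.
move=> [bS invS] [bT invT]; split; first exact: bop_comp.
by move=> M FM x Mx; apply: (invS M FM); apply: (invT M FM).
Qed.

Lemma commutant_id A : commutant A id.
Proof. by split; first exact: bop_id. Qed.

Lemma commutant_comp A V W : commutant A V -> commutant A W -> commutant A (V \o W).
Proof.
move=> [bV cV] [bW cW]; split; first exact: bop_comp.
move=> T AT; apply: funext => x /=.
by rewrite (comp_commute (cW T AT)) (comp_commute (cV T AT)).
Qed.

Lemma commutant_conj A S S' W : bop S -> bop S' -> S' \o S = id ->
  (forall T, A T -> A (S \o T \o S')) ->
  commutant A W -> commutant A (S' \o W \o S).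
Proof.
move=> bS bS' S'S Aconj [bW cW]; split; first by apply: bop_comp => //; apply: bop_comp.
move=> T AT; apply: funext => x /=.
have STS'_S : S (T x) = (S \o T \o S') (S x) by rewrite /= (comp_idK S'S).
by rewrite STS'_S (comp_commute (cW _ (Aconj T AT))) /= (comp_idK S'S).
Qed.

Lemma image_invertible S S' M : S \o S' = id -> S' \o S = id ->
  S @` M = S' @^-1` M.
Proof.
move=> SS' S'S; apply/seteqP; split => x.
  by move=> [y My <-]; rewrite /preimage /= (comp_idK S'S).
by move=> Mx; exists (S' x); last exact: (comp_idK SS').
Qed.

Lemma closed_subspace_image S S' M : bop S -> bop S' ->
  S \o S' = id -> S' \o S = id -> closed_subspace M -> closed_subspace (S @` M).
Proof.
move=> bS [_ contS'] SS' S'S [M0 [Mlin Mclosed]]; split; last split.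
- by exists 0 => //; exact: bop0.
- move=> a x y [x' Mx' <-] [y' My' <-]; exists (a *: x' + y'); first exact: Mlin.
  by case: bS => linS _; rewrite linS.
- rewrite (image_invertible M SS' S'S).
  by apply: preimage_closed => // x _; exact: contS'.
Qed.

Lemma Col_inverse TT S S' : Col TT S -> S \o S' = id -> S' \o S = id -> Col TT S'.
Proof.
move=> [GS colS] SS' S'S; have GS' := Grp_inverse GS SS'.
split=> // M csM.
have csSM := closed_subspace_image GS'.1 GS.1 S'S SS' csM.
by have := colS _ csSM; rewrite image_cancel //; case.
Qed.

Lemma Col_intro TT S S' : bop S -> bop S' -> S \o S' = id -> S' \o S = id ->
  (forall M, Lat TT M -> Lat TT (S @` M)) ->
  (forall M, Lat TT M -> Lat TT (S' @` M)) -> Col TT S.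
Proof.
move=> bS bS' SS' S'S LatS LatS'; split; first by split=> //; exists S'.
move=> M _; split; first exact: LatS.
by move=> /LatS'; rewrite image_cancel.
Qed.

Lemma Lat_image_commutant A V M :
  Grp (commutant A) V -> Lat A M -> Lat A (V @` M).
Proof.
move=> [[bV cV] [V' [[bV' _] [VV' V'V]]]] [csM invM].
split; first exact: (closed_subspace_image bV bV' VV' V'V).
move=> T AT _ [y My <-]; exists (T y); first exact: invM.
exact: (comp_commute (cV T AT)).
Qed.

Lemma Lat_image_Grp A U M : Grp A U -> Lat A M -> U @` M = M.
Proof.
move=> [AU [U' [AU' [UU' _]]]] [_ invM]; apply/seteqP; split => x.
  by move=> [y My <-]; exact: invM.
by move=> Mx; exists (U' x); [exact: invM | exact: (comp_idK UU')].
Qed.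

Section Reflexive.
Variable A : set (X -> X).
Hypothesis reflA : reflexive_alg A.

Lemma reflexive_sub_bop : A `<=` @bop _ X.
Proof. by rewrite -reflA; exact: Alg_sub_bop. Qed.

Lemma reflexive_id : A id.
Proof. by rewrite -reflA; exact: Alg_id. Qed.

Lemma reflexive_comp S T : A S -> A T -> A (S \o T).
Proof. by rewrite -reflA; exact: Alg_comp. Qed.

Lemma Col_conj S S' T :
  Col A S -> S \o S' = id -> S' \o S = id -> A T -> A (S' \o T \o S).
Proof.
move=> colS SS' S'S AT.
rewrite -reflA; split.
  apply: bop_comp; last exact: colS.1.1.
  apply: bop_comp; last exact: reflexive_sub_bop.
  exact: (Col_inverse colS SS' S'S).1.1.
move=> M LatM x Mx.
have [_ invSM] : Lat A (S @` M) by apply: (colS.2 M LatM.1).1.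
have [y My Sy] : (S @` M) (T (S x)) by apply: invSM => //; exists x.
by rewrite /= -Sy (comp_idK S'S).
Qed.

Lemma Col_conj_commutant S S' W : Col A S -> S \o S' = id -> S' \o S = id ->
  commutant A W -> commutant A (S' \o W \o S).
Proof.
move=> colS SS' S'S; have colS' := Col_inverse colS SS' S'S.
apply: (commutant_conj colS.1.1 colS'.1.1 S'S).
by move=> T; apply: (Col_conj colS' S'S SS').
Qed.

Lemma Lat_commutant_image S S' M : Col A S -> S \o S' = id -> S' \o S = id ->
  Lat (commutant A) M -> Lat (commutant A) (S @` M).
Proof.
move=> colS SS' S'S [csM invM]; have bS' := (Col_inverse colS SS' S'S).1.1.
split; first exact: (closed_subspace_image colS.1.1 bS' SS' S'S).
move=> W cW _ [x Mx <-]; exists ((S' \o W \o S) x).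
  by apply: invM => //; exact: (Col_conj_commutant colS SS' S'S).
by rewrite /= (comp_idK SS').
Qed.

Lemma Col_sub_Col_commutant : Col A `<=` Col (commutant A).
Proof.
move=> S colS; have [[bS [S' [bS' [SS' S'S]]]] _] := colS.
have colS' := Col_inverse colS SS' S'S.
apply: (Col_intro bS bS' SS' S'S) => M.
  exact: (Lat_commutant_image colS SS' S'S).
exact: (Lat_commutant_image colS' S'S SS').
Qed.

Lemma Grp_commutant_comm U V : Grp A U -> Grp (commutant A) V -> V \o U = U \o V.
Proof. by move=> [AU _] [[_ cV] _]; exact: cV. Qed.

Lemma GrpProd_id : GrpProd A id.
Proof.
exists id, id; split; first exact: (Grp_id reflexive_id).
by split; first exact: (Grp_id (commutant_id A)).
Qed.

Lemma GrpProd_comp S T : GrpProd A S -> GrpProd A T -> GrpProd A (S \o T).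
Proof.
move=> [U1 [V1 [GU1 [GV1 ->]]]] [U2 [V2 [GU2 [GV2 ->]]]].
exists (U1 \o U2), (V1 \o V2); split; first exact: (Grp_comp reflexive_comp).
split; first by apply: Grp_comp => //; exact: commutant_comp.
by apply: funext => x /=; rewrite (comp_commute (Grp_commutant_comm GU2 GV1)).
Qed.

Lemma GrpProd_Grp : GrpProd A `<=` Grp (GrpProd A).
Proof.
move=> _ [U [V [GU [GV ->]]]]; split; first by exists U, V.
have [_ [U' [_ [UU' U'U]]]] := GU; have [_ [V' [_ [VV' V'V]]]] := GV.
have GU' := Grp_inverse GU UU'; have GV' := Grp_inverse GV VV'.
exists (U' \o V'); split; first by exists U', V'.
by split; apply: funext => x /=;
  rewrite ?(comp_commute (Grp_commutant_comm GU' GV)) ?(comp_idK UU') ?(comp_idK VV')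
          ?(comp_commute (Grp_commutant_comm GU GV')) ?(comp_idK U'U) ?(comp_idK V'V).
Qed.

Lemma GrpProd_inverse S S' : GrpProd A S -> S \o S' = id -> GrpProd A S'.
Proof. by move=> /GrpProd_Grp GS SS'; exact: (Grp_inverse GS SS').1. Qed.

Lemma GrpProd_sub_bop : GrpProd A `<=` @bop _ X.
Proof.
move=> _ [U [V [[AU _] [[[bV _] _] ->]]]].
exact: (bop_comp (reflexive_sub_bop AU) bV).
Qed.

Lemma Lat_image_GrpProd S M : GrpProd A S -> Lat A M -> Lat A (S @` M).
Proof.
move=> [U [V [GU [GV ->]]]] LatM; rewrite -image_comp.
have LatVM := Lat_image_commutant GV LatM.
by rewrite (Lat_image_Grp GU LatVM).
Qed.

Lemma GrpProd_sub_Col : GrpProd A `<=` Col A.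
Proof.
move=> S GS; have [_ [S' [GS' [SS' S'S]]]] := GrpProd_Grp GS.
apply: (Col_intro (GrpProd_sub_bop GS) (GrpProd_sub_bop GS') SS' S'S) => M.
  exact: Lat_image_GrpProd.
exact: Lat_image_GrpProd.
Qed.

Lemma GrpProd_conj S S' T : Col A S -> S \o S' = id -> S' \o S = id ->
  GrpProd A T -> GrpProd A (S \o T \o S').
Proof.
move=> colS SS' S'S [U [V [GU [GV ->]]]]; have colS' := Col_inverse colS SS' S'S.
exists (S \o U \o S'), (S \o V \o S'); split.
  apply: (Grp_conj _ SS' S'S GU) => W; exact: (Col_conj colS' S'S SS').
split.
  apply: (Grp_conj _ SS' S'S GV) => W; exact: (Col_conj_commutant colS' S'S SS').
by apply: funext => x /=; rewrite (comp_idK S'S).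
Qed.

End Reflexive.
End Operators.

Theorem theorem3p10 (R : realType) (X : completeNormedModType R[i])
    (A : set (X -> X)) :
  subalgebra A -> reflexive_alg A ->
  (GrpProd A `<=` Col A /\ Col A `<=` Col (commutant A)) /\
  (reflexive_alg (commutant A) -> normal_subgroup (GrpProd A) (Col A)).
Proof.
move=> _ reflA; split.
  by split; [exact: GrpProd_sub_Col | exact: Col_sub_Col_commutant].
move=> _; split; first exact: GrpProd_sub_Col.
split; first exact: GrpProd_id.
split; first exact: GrpProd_comp.
split; first by move=> S S' GS SS' _; exact: (GrpProd_inverse GS SS').
move=> S S' T colS SS' S'S; exact: GrpProd_conj.
Qed.
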